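(* Let $M$ be a unicyclic partial multiplication matrix, let $\pi^\#$ be a gridded $M$-coil with points $v_1,\dots,v_n$ and let $\sigma^\#$ be a gridded $M$-coil with points $u_1,\dots,u_m$ (each ordered as in the definition of a coil), where $m<n$. Let $L=\{\bullet,\circ\}$ be a two-element antichain, and label $\pi^\#$ by $\ell(v_i)=\bullet$ for $1<i<n$ and $\ell(v_1)=\ell(v_n)=\circ$, and $\sigma^\#$ by $\ell(u_i)=\bullet$ for $1<i<m$ and $\ell(u_1)=\ell(u_m)=\circ$. Then there is no labelled embedding of the labelled gridded permutation $\sigma^\#$ into the labelled gridded permutation $\pi^\#$.
   Context: A gridding matrix has entries in $\{0,1,-1\}$; an $m\times n$ one has $m$ columns, $n$ rows, $M_{ij}$ in column $i$ from the left and row $j$ from the bottom. An $M$-gridding of a permutation $\pi$ of length $L$ is a choice of vertical lines $\tfrac12=v_0\le\dots\le v_m=L+\tfrac12$ and horizontal lines $\tfrac12=h_0\le\dots\le h_n=L+\tfrac12$, not through points of $\pi$, such that in each cell $C_{ij}=\{v_{i-1}<x<v_i,\ h_{j-1}<y<h_j\}$ the points of $\pi$ are absent if $M_{ij}=0$, increasing if $M_{ij}=1$, decreasing if $M_{ij}=-1$; the result is an $M$-gridded permutation. The row-column graph $G_M$ is the bipartite graph on $\{1,\dots,m\}\cup\{1',\dots,n'\}$ with edge $ij'$ iff $M_{ij}\neq0$; $M$ is unicyclic if $G_M$ has exactly one cycle. A labelled embedding of a labelled gridded permutation $\sigma^\#$ into $\pi^\#$ is a subsequence of $\pi$ order-isomorphic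 to $\sigma$ mapping each point of $\sigma^\#$ to a point in the cell with the same index and with the same label (labels form an antichain). $M$ is a partial multiplication matrix: there are fixed $c_1,\dots,c_m,r_1,\dots,r_n\in\{\pm1\}$ with $M_{ij}=c_ir_j$ for each non-zero entry. Column $i$ is oriented left-to-right if $c_i=1$, right-to-left otherwise; row $j$ bottom-to-top if $r_j=1$, top-to-bottom otherwise. The orientation digraph of an $M$-gridded permutation has its points as vertices with $x\to y$ whenever $x,y$ lie in a common column of cells and $x$ precedes $y$ in that column's orientation, or in a common row of cells and $x$ precedes $y$ in that row's orientation. Let $\ell$ be the length of the cycle of $G_M$. A gridded $M$-coil is an $M$-gridded permutation of length $n>\ell$ with an ordering $v_1,\dots,v_n$ of its points and a labelling by $1,\dots,\ell$ of the cells corresponding to the edges of the cycle such that (C1) $v_i$ lies in cell $i\bmod\ell$ (residues in $\{1,\dots,\ell\}$); (C2) $v_{i-1}\to v_i$ for $1<i\le n$; (C3) $v_i\to v_{i-\ell-1}$ for $\ell+1<i\le n$; (C4) $v_{\ell+1}\to v_1$. *)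

From mathcomp Require Import all_boot all_order all_algebra all_fingroup.
Set Implicit Arguments. Unset Strict Implicit. Unset Printing Implicit Defensive.
Import GRing.Theory Num.Theory.
Local Open Scope ring_scope.

(* Conventions (0-indexed): an m x n gridding matrix has m columns and n rows;
   M i j (i : 'I_m, j : 'I_n) is the entry in column i and row j (both counted
   from the left/bottom starting at 0). *)

Definition gridding_matrix (m n : nat) (M : 'M[int]_(m, n)) : Prop :=
  forall i j, M i j = 0 \/ M i j = 1 \/ M i j = -1.

Definition sign (x : int) : Prop := x = 1 \/ x = -1.

Definition partial_mult (m n : nat) (M : 'M[int]_(m, n))
  (c : 'I_m -> int) (r : 'I_n -> int) : Prop :=
  gridding_matrix M /\ (forall i, sign (c i)) /\ (forall j, sign (r j)) /\
  (forall i j, M i j != 0 -> M i j = c i * r j).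

(** Row-column graph G_M: vertices are columns (inl i) and rows (inr j). *)
Definition rc_adj (m n : nat) (M : 'M[int]_(m, n)) : rel ('I_m + 'I_n) :=
  fun a b => match a, b with
             | inl i, inr j => M i j != 0
             | inr j, inl i => M i j != 0
             | _, _ => false
             end.

Definition cell_edge (m n : nat) (e : 'I_m * 'I_n) (a b : 'I_m + 'I_n) : bool :=
  ((a == inl e.1) && (b == inr e.2)) || ((a == inr e.2) && (b == inl e.1)).

Definition cycle_cells (m n : nat) (M : 'M[int]_(m, n))
  (S : {set 'I_m * 'I_n}) : Prop :=
  exists w : seq ('I_m + 'I_n),
    [/\ uniq w, 3 <= size w, path.cycle (rc_adj M) w &
        S = [set e | [exists x, (x \in w) && cell_edge e x (next w x)]]]%N.

Definition unicyclic (m n : nat) (M : 'M[int]_(m, n)) : Prop :=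
  exists S, cycle_cells M S /\ forall S', cycle_cells M S' -> S' = S.

(** A permutation of length L is p : {perm 'I_L};
   its points are (x, p x) for x : 'I_L (0-indexed coordinates).
   A vertical line v_k = t + 1/2 (1-indexed coordinates) is encoded by the
   integer t = gv k, so v_0 = 1/2 and v_m = L + 1/2 become gv 0 = 0 and
   gv m = L; point x lies strictly between v_i and v_{i+1} iff
   gv i <= x < gv (i+1).  Same for horizontal lines gh. *)
Record gperm := GPerm {
  glen : nat;
  gp : {perm 'I_glen};
  gv : nat -> nat;
  gh : nat -> nat }.

Definition in_col (g : gperm) (i : nat) (x : 'I_(glen g)) : bool :=
  (gv g i <= x < gv g i.+1)%N.
Definition in_row (g : gperm) (j : nat) (x : 'I_(glen g)) : bool :=
  (gh g j <= gp g x < gh g j.+1)%N.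
Arguments in_col : clear implicits.
Arguments in_row : clear implicits.
Definition in_cell (g : gperm) (i j : nat) (x : 'I_(glen g)) : bool :=
  in_col g i x && in_row g j x.
Arguments in_cell : clear implicits.

Definition is_M_gridded (m n : nat) (M : 'M[int]_(m, n)) (g : gperm) : Prop :=
  [/\ gv g 0 = 0%N /\ gv g m = glen g, gh g 0 = 0%N /\ gh g n = glen g,
      (forall k, (k < m)%N -> (gv g k <= gv g k.+1)%N),
      (forall k, (k < n)%N -> (gh g k <= gh g k.+1)%N) &
      forall (i : 'I_m) (j : 'I_n),
        [/\ (M i j = 0 -> forall x, ~~ in_cell g i j x),
            (M i j = 1 -> forall x y, in_cell g i j x -> in_cell g i j y ->
                           (x < y)%N -> (gp g x < gp g y)%N) &
            (M i j = -1 -> forall x y, in_cell g i j x -> in_cell g i j y ->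
                           (x < y)%N -> (gp g y < gp g x)%N)]].

Definition oriented (m n : nat) (c : 'I_m -> int) (r : 'I_n -> int)
  (g : gperm) (x y : 'I_(glen g)) : Prop :=
  (exists i : 'I_m, [/\ in_col g i x, in_col g i y &
        if c i == 1 then (x < y)%N else (y < x)%N]) \/
  (exists j : 'I_n, [/\ in_row g j x, in_row g j y &
        if r j == 1 then (gp g x < gp g y)%N else (gp g y < gp g x)%N]).

(** S is the set of cells of the unique cycle of G_M, so
   ell = #|S|.  The ordering v_1, ..., v_N of the points is given by the
   bijection s (v_{k+1} = s k), and the labelling of the cycle cells by
   1..ell by the bijection lab : 'I_ell -> S (label k+1 is lab k). *)
Definition is_coil (m n : nat) (M : 'M[int]_(m, n)) (c : 'I_m -> int)
  (r : 'I_n -> int) (S : {set 'I_m * 'I_n}) (g : gperm)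
  (s : {perm 'I_(glen g)}) (lab : 'I_#|S| -> 'I_m * 'I_n) : Prop :=
  [/\ is_M_gridded M g,
      (#|S| < glen g)%N,
      injective lab & (forall e, e \in S <-> exists k, lab k = e)] /\
  [/\
      (forall k : 'I_(glen g), forall k' : 'I_#|S|, (k %% #|S| = k')%N ->
          in_cell g (lab k').1 (lab k').2 (s k)),
      (forall (k k1 : 'I_(glen g)), k1 = k.+1 :> nat -> oriented c r (s k) (s k1)),
      (forall (k k1 : 'I_(glen g)), (#|S| < k)%N -> k1 = (k - #|S|.+1)%N :> nat ->
          oriented c r (s k) (s k1)) &
      (forall (k k1 : 'I_(glen g)), k = #|S| :> nat -> k1 = 0%N :> nat ->
          oriented c r (s k) (s k1))].

Arguments is_coil {m n} M c r S g s lab.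

(** Labels: true = hollow (circle), false = bullet.  In a coil with ordering s,
   the first and last points are circles, the others bullets. *)
Definition coil_label (g : gperm) (s : {perm 'I_(glen g)}) (x : 'I_(glen g)) : bool :=
  (nat_of_ord (s^-1 x)%g == 0%N) || (nat_of_ord (s^-1 x)%g == (glen g).-1).

Definition labelled_embedding (m n : nat) (h g : gperm) (lh : 'I_(glen h) -> bool)
  (lg : 'I_(glen g) -> bool) (f : 'I_(glen h) -> 'I_(glen g)) : Prop :=
  [/\ (forall a b : 'I_(glen h), (a < b)%N -> (f a < f b)%N),
      (forall a b : 'I_(glen h), (gp h a < gp h b)%N = (gp g (f a) < gp g (f b))%N),
      (forall (a : 'I_(glen h)) (i : 'I_m) (j : 'I_n), in_cell h i j a -> in_cell g i j (f a)) &
      (forall a, lh a = lg (f a))].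

Arguments labelled_embedding m n {h g} lh lg f.

From mathcomp Require Import all_boot all_order all_algebra all_fingroup.
From mathcomp Require Import zify.
Set Implicit Arguments. Unset Strict Implicit. Unset Printing Implicit Defensive.

(* Inside one row or column of cells the orientation digraph is a strict
   linear order, and since M is a partial multiplication matrix the row and
   the column orientation agree inside each cell; hence arcs x -> y -> z
   compose as soon as two of x, y, z share a cell.  In a coil, (C2)-(C4) then
   give v_j -> v_i whenever i < j and v_i, v_j share a cell, and the only arcs
   v_i -> v_j with i < j are those with j = i + 1: for any other j, either
   v_j -> v_i follows by composing arcs, or a row or column of cells would
   meet three distinct cells of the cycle, whose vertices have degree two.
   A labelled embedding of sigma into pi preserves arcs and sends u_1 to v_1
   or to v_n.  In the first case the arcs u_k -> u_(k+1) force u_k to v_k for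
   every k, so the hollow u_m lands on the bullet v_m.  In the second, the arcs
   u_ell -> u_1 and u_(ell+1) -> u_1 force u_ell and u_(ell+1) onto v_(n-1). *)

Lemma ltn_swap a b : a != b -> (b < a) = ~~ (a < b).
Proof. by move=> ab; rewrite -leqNgt ltn_neqAle eq_sym ab. Qed.

Lemma eqmod_ltn_leq l a b : 0 < l -> a < b -> a = b %[mod l] -> a + l <= b.
Proof.
move=> l_gt0 ab /eqP; rewrite eq_sym eqn_mod_dvd; last exact: ltnW.
by move=> /dvdn_leq; rewrite subn_gt0 => /(_ ab); lia.
Qed.

Lemma subn_modr l b : l <= b -> b - l = b %[mod l].
Proof. by move=> lb; rewrite -{2}(subnK lb) modnDr. Qed.

Lemma consecutive_residues l p : 2 < l ->
  [/\ p != p.+1 %[mod l], p.+1 != p.+2 %[mod l] & p != p.+2 %[mod l]].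
Proof.
move=> l_gt2; have neq d e : d < l -> e < l -> d != e -> p + d != p + e %[mod l].
  by move=> dl el; rewrite eqn_modDl (modn_small dl) (modn_small el).
split.
- by have := neq 0 1; rewrite addn0 addn1; apply; lia.
- by have := neq 1 2; rewrite addn1 addn2; apply; lia.
- by have := neq 0 2; rewrite addn0 addn2; apply; lia.
Qed.

Lemma injective_chain_id (phi : nat -> nat) K : phi 0 = 0 ->
  {in gtn K &, injective phi} ->
  (forall k, k.+1 < K -> phi k.+1 < phi k \/ phi k.+1 = (phi k).+1) ->
  {in gtn K, forall k, phi k = k}.
Proof.
move=> phi0 phi_inj step k; elim/ltn_ind: k => -[// | k] IH /[!inE] kK.
have phik : phi k = k by apply: IH; rewrite ?inE; lia.
case: (step k kK) => [|->]; rewrite phik // => back.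
have := IH _ (leqW back) (ltn_trans back (ltnW kK)).
by move/phi_inj; rewrite !inE => /(_ (ltn_trans back (ltnW kK)) kK); lia.
Qed.

Section MonotonePartition.
Variables (v : nat -> nat) (K : nat).
Hypothesis v_step : forall k, k < K -> v k <= v k.+1.

Lemma partition_mono : {in gtn K.+1 &, {homo v : i j / i <= j}}.
Proof.
apply: homo_leq_in => [//|y x z|i j _ jK k /andP[_ kj]|i _ iK].
- exact: leq_trans.
- by rewrite inE in jK *; exact: ltn_trans kj jK.
- exact: v_step.
Qed.

Lemma partition_uniq i j x : i < K -> j < K ->
  v i <= x < v i.+1 -> v j <= x < v j.+1 -> i = j.
Proof.
wlog ij : i j / i <= j.
  move=> hwlog iK jK hi hj; case: (leqP i j) => [ij|/ltnW ji].
  - exact: hwlog.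
  - by symmetry; exact: hwlog.
move=> iK jK /andP[_ xi] /andP[jx _]; apply/eqP; rewrite eqn_leq ij leqNgt.
by apply/negP => lt_ij; have := @partition_mono i.+1 j iK (ltnW jK) lt_ij; lia.
Qed.

End MonotonePartition.

Lemma partition_cover (v : nat -> nat) k x :
  v 0 = 0 -> x < v k -> exists2 i, i < k & v i <= x < v i.+1.
Proof.
move=> v0; elim: k => [|k IH]; first by rewrite v0.
case: (ltnP x (v k)) => [/IH [i ik hi] _ | vk xk]; first by exists i => //; exact: leqW.
by exists k; rewrite ?vk.
Qed.

Section Grid.
Variables (m n : nat) (M : 'M[int]_(m, n)) (c : 'I_m -> int) (r : 'I_n -> int).
Variable g : gperm.
Hypothesis HM : partial_mult M c r.
Hypothesis Hg : is_M_gridded M g.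
Local Notation "x --> y" := (oriented c r x y) (at level 70).

Definition on_line (L : 'I_m + 'I_n) (x : 'I_(glen g)) : bool :=
  match L with inl i => in_col g i x | inr j => in_row g j x end.

Definition line_lt (L : 'I_m + 'I_n) (x y : 'I_(glen g)) : bool :=
  match L with
  | inl i => if c i == 1%R then x < y else y < x
  | inr j => if r j == 1%R then gp g x < gp g y else gp g y < gp g x
  end.

Definition same_cell (x y : 'I_(glen g)) : Prop :=
  exists (i : 'I_m) (j : 'I_n), in_cell g i j x /\ in_cell g i j y.

Lemma in_col_inj (i i' : 'I_m) x : in_col g i x -> in_col g i' x -> i = i'.
Proof.
case: Hg => _ _ gv_step _ _ hi hi'; apply: val_inj.
exact: (partition_uniq gv_step (ltn_ord i) (ltn_ord i') hi hi').
Qed.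

Lemma in_row_inj (j j' : 'I_n) x : in_row g j x -> in_row g j' x -> j = j'.
Proof.
case: Hg => _ _ _ gh_step _ hj hj'; apply: val_inj.
exact: (partition_uniq gh_step (ltn_ord j) (ltn_ord j') hj hj').
Qed.

Lemma point_in_cell x : exists (i : 'I_m) (j : 'I_n), in_cell g i j x.
Proof.
case: Hg => [[gv0 gvm] [gh0 ghn] _ _ _].
have [i im hi] : exists2 i, i < m & gv g i <= x < gv g i.+1.
  by apply: partition_cover gv0 _; rewrite gvm.
have [j jn hj] : exists2 j, j < n & gh g j <= gp g x < gh g j.+1.
  by apply: partition_cover gh0 _; rewrite ghn.
by exists (Ordinal im), (Ordinal jn); apply/andP.
Qed.

Lemma lines_through_point L1 L2 L3 x :
  on_line L1 x -> on_line L2 x -> on_line L3 x -> [\/ L1 = L2, L1 = L3 | L2 = L3].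
Proof.
case: L1 L2 L3 => [i1|j1] [i2|j2] [i3|j3] /= h1 h2 h3.
all: first [ by apply: Or31; rewrite (in_col_inj h1 h2)
           | by apply: Or31; rewrite (in_row_inj h1 h2)
           | by apply: Or32; rewrite (in_col_inj h1 h3)
           | by apply: Or32; rewrite (in_row_inj h1 h3)
           | by apply: Or33; rewrite (in_col_inj h2 h3)
           | by apply: Or33; rewrite (in_row_inj h2 h3) ].
Qed.

Lemma cell_line (i : 'I_m) (j : 'I_n) L x :
  in_cell g i j x -> on_line L x -> L = inl i \/ L = inr j.
Proof.
case/andP=> xi xj; case: L => [i'|j'] /= xL.
- by left; rewrite (in_col_inj xL xi).
- by right; rewrite (in_row_inj xL xj).
Qed.

Lemma same_cell_sym x y : same_cell x y -> same_cell y x.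
Proof. by case=> i [j [hx hy]]; exists i, j. Qed.

Lemma same_cell_on_line L x y : same_cell x y -> on_line L x -> on_line L y.
Proof. by case=> i [j [hx /andP[yi yj]]] /(cell_line hx) [->|->]. Qed.

Lemma line_lt_irr L x : line_lt L x x = false.
Proof. by case: L => [i|j] /=; case: ifP; rewrite ltnn. Qed.

Lemma line_lt_trans L x y z : line_lt L x y -> line_lt L y z -> line_lt L x z.
Proof. by case: L => [i|j] /=; case: ifP => _; lia. Qed.

Lemma line_lt_swap L x y : x != y -> line_lt L y x = ~~ line_lt L x y.
Proof.
move=> xy; have pxy : gp g x != gp g y by rewrite (inj_eq perm_inj).
by case: L => [i|j] /=; case: ifP => _; rewrite ltn_swap // eq_sym.
Qed.

(* This is where M being a partial multiplication matrix is used. *)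
Lemma line_lt_cell (i : 'I_m) (j : 'I_n) x y : in_cell g i j x -> in_cell g i j y ->
  line_lt (inl i) x y = line_lt (inr j) x y.
Proof.
move=> hx hy; have [<-|xy] := eqVneq x y; first by rewrite !line_lt_irr.
wlog lt_xy : x y hx hy xy / x < y.
  move=> hwlog; case: (ltngtP x y) => [|yx|/val_inj/eqP]; last by rewrite (negPf xy).
    exact: hwlog.
  have yx' : y != x by rewrite eq_sym.
  by rewrite !(line_lt_swap _ yx') hwlog.
case: Hg => _ _ _ _ /(_ i j) [cell0 cell_inc cell_dec].
case: HM => entries [c_sign [r_sign mult]].
have Mij : M i j = (c i * r j)%R.
  by apply: mult; apply: contraTneq hx => /cell0; apply.
have mono : (gp g x < gp g y) = (M i j == 1%R).
  case: (entries i j) => [/cell0 /(_ x)|[e|e]]; first by rewrite hx.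
  - by rewrite e (cell_inc e x y hx hy lt_xy).
  - by rewrite e; have := cell_dec e x y hx hy lt_xy; lia.
have yx : (y < x) = false by rewrite ltnNge (ltnW lt_xy).
have pyx : (gp g y < gp g x) = ~~ (gp g x < gp g y).
  by apply: ltn_swap; rewrite (inj_eq val_inj) (inj_eq perm_inj).
rewrite /= lt_xy yx pyx mono Mij.
by have [->|->] := c_sign i; have [->|->] := r_sign j.
Qed.

Lemma orientedE x y :
  x --> y <-> exists L, [/\ on_line L x, on_line L y & line_lt L x y].
Proof.
split.
- by case=> [[i hi]|[j hj]]; [exists (inl i) | exists (inr j)].
- by case=> [[i|j] hL]; [left; exists i | right; exists j].
Qed.

Lemma oriented_line_lt L x y : x --> y -> on_line L x -> on_line L y -> line_lt L x y.
Proof.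
case/orientedE => L' [xL' yL']; case: L L' xL' yL' => [i|j] [i'|j'] xL' yL' lt_xy xL yL.
- by rewrite (in_col_inj xL xL').
- by rewrite (@line_lt_cell i j') //; apply/andP.
- by rewrite -(@line_lt_cell i' j) //; apply/andP.
- by rewrite (in_row_inj xL xL').
Qed.

Lemma oriented_irr (x : 'I_(glen g)) : ~ x --> x.
Proof. by case/orientedE => L [_ _]; rewrite line_lt_irr. Qed.

Lemma oriented_asym (x y : 'I_(glen g)) : x --> y -> ~ y --> x.
Proof.
move=> /[dup] xy /orientedE [L [xL yL _]] /oriented_line_lt /(_ yL xL) lt_yx.
by have := line_lt_trans lt_yx (oriented_line_lt xy xL yL); rewrite line_lt_irr.
Qed.

(* The arcs x --> y and y --> z lie on a common line as soon as two of the
   three points share a cell, and orientation is transitive along a line. *)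
Lemma oriented_trans_cell (x y z : 'I_(glen g)) : x --> y -> y --> z ->
  [\/ same_cell x y, same_cell x z | same_cell y z] -> x --> z.
Proof.
move=> xy yz cells.
suff [L [xL yL zL]] : exists L, [/\ on_line L x, on_line L y & on_line L z].
  apply/orientedE; exists L; split => //.
  exact: line_lt_trans (oriented_line_lt xy xL yL) (oriented_line_lt yz yL zL).
case: cells => [cxy|cxz|cyz].
- case/orientedE: yz => L [yL zL _]; exists L; split => //.
  exact: same_cell_on_line (same_cell_sym cxy) yL.
- case/orientedE: xy => L [xL yL _]; exists L; split => //.
  exact: same_cell_on_line cxz xL.
- case/orientedE: xy => L [xL yL _]; exists L; split => //.
  exact: same_cell_on_line cyz yL.
Qed.

End Grid.

Lemma labelled_embedding_inj m n (h g : gperm) lh lg f :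
  @labelled_embedding m n h g lh lg f -> injective f.
Proof.
case=> f_mono _ _ _ x y fxy; apply: val_inj.
by case: (ltngtP x y) => // /f_mono; rewrite fxy ltnn.
Qed.

Lemma labelled_embedding_oriented m n (M : 'M[int]_(m, n)) (c : 'I_m -> int)
  (r : 'I_n -> int) (h g : gperm) lh lg f :
  is_M_gridded M h -> @labelled_embedding m n h g lh lg f ->
  forall x y, oriented c r x y -> oriented c r (f x) (f y).
Proof.
move=> hM [f_mono f_gp f_cell _] x y /orientedE [L [xL yL lt_xy]].
have f_line z : on_line L z -> on_line L (f z).
  move=> zL; have [i [j zij]] := point_in_cell hM z.
  by case: (cell_line hM zij zL) => ->; case/andP: (f_cell _ _ _ zij).
apply/orientedE; exists L; split; try exact: f_line.
case: L {xL yL f_line} lt_xy => [i|j] /=; last by rewrite -!f_gp.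
by case: ifP => _; apply: f_mono.
Qed.

Definition incident m n (L : 'I_m + 'I_n) (e : 'I_m * 'I_n) : bool :=
  (L == inl e.1) || (L == inr e.2).

Definition other_end m n (L : 'I_m + 'I_n) (e : 'I_m * 'I_n) : 'I_m + 'I_n :=
  if L is inl _ then inr e.2 else inl e.1.

Lemma other_end_inj m n L (e1 e2 : 'I_m * 'I_n) :
  incident L e1 -> incident L e2 -> other_end L e1 = other_end L e2 -> e1 = e2.
Proof.
case: e1 e2 => [a1 b1] [a2 b2].
by case: L => [i|j]; rewrite /incident /= ?orbF => /eqP[->] /eqP[->] [->].
Qed.

Lemma cycle_other_end m n (w : seq ('I_m + 'I_n)) L e : uniq w ->
  [exists x, (x \in w) && cell_edge e x (next w x)] -> incident L e ->
  other_end L e = next w L \/ other_end L e = prev w L.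
Proof.
move=> w_uniq /existsP [x /andP [_ ex]].
case: e ex => [a b]; rewrite /cell_edge /incident /=.
case/orP=> /andP [/eqP-> /eqP enx] /orP [] /eqP ->.
- by left; rewrite /= enx.
- by right; rewrite /= -enx prev_next.
- by right; rewrite /= -enx prev_next.
- by left; rewrite /= enx.
Qed.

(* Lines are the vertices of G_M and cells its edges: a vertex of a cycle has
   degree two in it. *)
Lemma cycle_cells_incident m n (M : 'M[int]_(m, n)) S L e1 e2 e3 : cycle_cells M S ->
  e1 \in S -> e2 \in S -> e3 \in S -> incident L e1 -> incident L e2 -> incident L e3 ->
  [\/ e1 = e2, e1 = e3 | e2 = e3].
Proof.
case=> w [w_uniq _ _ ->]; rewrite !inE.
move=> /cycle_other_end o1 /cycle_other_end o2 /cycle_other_end o3 i1 i2 i3.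
case: (o1 L w_uniq i1) (o2 L w_uniq i2) (o3 L w_uniq i3) => h1 [] h2 [] h3.
all: first [ by apply: Or31; apply: other_end_inj i1 i2 _; rewrite h1 h2
           | by apply: Or32; apply: other_end_inj i1 i3 _; rewrite h1 h3
           | by apply: Or33; apply: other_end_inj i2 i3 _; rewrite h2 h3 ].
Qed.

Section Coil.
Variables (m n : nat) (M : 'M[int]_(m, n)) (c : 'I_m -> int) (r : 'I_n -> int).
Variables (S : {set 'I_m * 'I_n}) (g : gperm) (s : {perm 'I_(glen g)}).
Variable lab : 'I_#|S| -> 'I_m * 'I_n.
Hypothesis HM : partial_mult M c r.
Hypothesis coil : is_coil M c r S g s lab.
Variable x0 : 'I_(glen g).

Local Notation N := (glen g).
Local Notation l := #|S|.

(* coil_pt k is v_(k+1); indices k >= N give the junk point s x0. *)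
Definition coil_pt (k : nat) : 'I_N := s (insubd x0 k).

Local Notation "a ~> b" := (oriented c r (coil_pt a) (coil_pt b)) (at level 70).

Lemma coil_gridded : is_M_gridded M g.
Proof. by case: coil => [[]]. Qed.

Lemma coil_cycle_lt : l < N.
Proof. by case: coil => [[]]. Qed.

Lemma coil_ptK (x : 'I_N) : coil_pt (s^-1 x)%g = x.
Proof. by rewrite /coil_pt valKd permKV. Qed.

Lemma coil_pt_index k : k < N -> val (s^-1 (coil_pt k))%g = k.
Proof. by move=> kN; rewrite /coil_pt permK val_insubd kN. Qed.

Lemma coil_next k : k.+1 < N -> k ~> k.+1.
Proof.
case: coil => _ [_ C2 _ _] kN; apply: C2.
by rewrite !val_insubd kN (ltnW kN).
Qed.

Lemma coil_skip k : l < k < N -> k ~> k - l.+1.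
Proof.
case: coil => _ [_ _ C3 _] /andP [lk kN]; apply: C3; rewrite !val_insubd kN //.
by rewrite ifT //; apply: leq_ltn_trans kN; apply: leq_subr.
Qed.

Lemma coil_close : l ~> 0.
Proof.
case: coil => _ [_ _ _ C4]; have lN := coil_cycle_lt.
by apply: C4; rewrite val_insubd ?lN // (leq_ltn_trans (leq0n l) lN).
Qed.

Lemma coil_cycle_gt0 : 0 < l.
Proof.
rewrite lt0n; apply/eqP => l0.
by apply: (@oriented_irr _ _ c r g (coil_pt 0)); have := coil_close; rewrite l0.
Qed.

Section CoilCells.
Hypothesis l_gt0 : 0 < l.
Hypothesis cyc : cycle_cells M S.

Definition coil_cell k : 'I_m * 'I_n := lab (Ordinal (ltn_pmod k l_gt0)).

Lemma coil_pt_in_cell k : k < N -> in_cell g (coil_cell k).1 (coil_cell k).2 (coil_pt k).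
Proof. by case: coil => _ [C1 _ _ _] kN; apply: C1; rewrite val_insubd kN. Qed.

Lemma coil_cell_in k : coil_cell k \in S.
Proof. by case: coil => [[_ _ _ labS] _]; apply/labS; eexists. Qed.

Lemma eq_coil_cell k k' : (coil_cell k == coil_cell k') = (k == k' %[mod l]).
Proof. by case: coil => [[_ _ lab_inj _] _]; rewrite (inj_eq lab_inj). Qed.

Lemma coil_same_cell k k' : k < N -> k' < N -> k = k' %[mod l] ->
  same_cell m n (coil_pt k) (coil_pt k').
Proof.
move=> kN k'N /eqP; rewrite -eq_coil_cell => /eqP kk'.
exists (coil_cell k).1, (coil_cell k).2.
by split; [|rewrite kk']; apply: coil_pt_in_cell.
Qed.

Lemma coil_trans a b d : a < N -> b < N -> d < N -> a ~> b -> b ~> d ->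
  [\/ a = b %[mod l], a = d %[mod l] | b = d %[mod l]] -> a ~> d.
Proof.
move=> aN bN dN ab bd cong; apply: (oriented_trans_cell HM coil_gridded ab bd).
by case: cong => e; [apply: Or31 | apply: Or32 | apply: Or33]; apply: coil_same_cell.
Qed.

Lemma coil_line_incident (L : 'I_m + 'I_n) k :
  k < N -> on_line L (coil_pt k) -> incident L (coil_cell k).
Proof.
move=> kN /(cell_line coil_gridded (coil_pt_in_cell kN)) [->|->].
all: by rewrite /incident eqxx ?orbT.
Qed.

Lemma coil_line_residues (L : 'I_m + 'I_n) a b d : a < N -> b < N -> d < N ->
  on_line L (coil_pt a) -> on_line L (coil_pt b) -> on_line L (coil_pt d) ->
  [\/ a = b %[mod l], a = d %[mod l] | b = d %[mod l]].
Proof.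
move=> aN bN dN /(coil_line_incident aN) ia /(coil_line_incident bN) ib.
move=> /(coil_line_incident dN) id.
have := cycle_cells_incident cyc (coil_cell_in a) (coil_cell_in b) (coil_cell_in d).
case/(_ L ia ib id) => /eqP; rewrite eq_coil_cell => /eqP.
all: by [apply: Or31 | apply: Or32 | apply: Or33].
Qed.

Lemma coil_step_back b : l <= b < N -> b ~> b - l.
Proof.
case/andP; rewrite leq_eqVlt => /orP [/eqP <- _|lb bN].
  by rewrite subnn; exact: coil_close.
have eb : b - l = (b - l.+1).+1 by lia.
apply: (@coil_trans b (b - l.+1) (b - l)); rewrite ?eb; try lia.
- by apply: coil_skip; apply/andP.
- by apply: coil_next; lia.
- by apply: Or32; rewrite -eb subn_modr // ltnW.
Qed.

Lemma coil_back a b : a < b < N -> a = b %[mod l] -> b ~> a.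
Proof.
elim/ltn_ind: b => b IH /andP [ab bN] ab_mod.
have alb := eqmod_ltn_leq l_gt0 ab ab_mod.
have back : b ~> b - l by apply: coil_step_back; apply/andP; split; lia.
have [-> //|a_ne] := eqVneq a (b - l).
apply: (@coil_trans b (b - l) a); try lia.
- exact: back.
- by apply: IH; [lia | apply/andP; split; lia | rewrite subn_modr //; lia].
- by apply: Or32.
Qed.

Lemma coil_back_to x d a : x < N -> d < N -> a <= d -> a = d %[mod l] -> x ~> d -> x ~> a.
Proof.
move=> xN dN; rewrite leq_eqVlt => /orP [/eqP -> //|ad] ad_mod xd.
apply: (@coil_trans x d a) => //; first exact: ltn_trans ad dN.
- by apply: coil_back => //; apply/andP.
- by apply: Or33.
Qed.

Lemma coil_wrap : l.-1 ~> 0.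
Proof.
have lN := coil_cycle_lt.
apply: (@coil_back_to _ l); rewrite ?modnn ?mod0n //; try lia.
by rewrite -{2}(prednK l_gt0); apply: coil_next; rewrite prednK.
Qed.

Lemma coil_back_near a p : a < p -> p.+1 < N ->
  [|| a == p %[mod l], a == p.+1 %[mod l] | a == p.+2 %[mod l]] -> p.+1 ~> a.
Proof.
move=> ap bN; case/or3P => /eqP cong.
- have alp := eqmod_ltn_leq l_gt0 ap cong.
  apply: (@coil_back_to _ (p.+1 - l.+1)); try lia.
  + by rewrite subSS subn_modr //; lia.
  + by apply: coil_skip; apply/andP; split; lia.
- by apply: coil_back => //; apply/andP; split; lia.
- have alp : a + l <= p.+2 by apply: eqmod_ltn_leq cong; lia.
  have [lb|bl] := leqP l p.+1; last first.
    have lN := coil_cycle_lt.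
    by apply: (@coil_back_to _ p.+2) => //; [lia | lia | apply: coil_next; lia].
  have ed : (p.+1 - l).+1 = p.+2 - l by lia.
  apply: (@coil_back_to _ (p.+1 - l).+1); try lia.
  + by rewrite ed subn_modr ?(leqW lb).
  + apply: (@coil_trans _ (p.+1 - l)); try lia.
    * by apply: coil_step_back; apply/andP.
    * by apply: coil_next; lia.
    * by apply: Or31; rewrite subn_modr.
Qed.

(* The lines of the arcs a ~> p.+1, p ~> p.+1 and k ~> k.+1, for k = p.+1 %% l,
   all pass through coil_pt p.+1, so two of them coincide, and that line would
   meet three distinct cells of the cycle. *)
Lemma coil_far_no_arrow a p : a < p.+1 -> p.+1 < N ->
  ~~ [|| a == p %[mod l], a == p.+1 %[mod l] | a == p.+2 %[mod l]] -> ~ a ~> p.+1.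
Proof.
move=> ab bN; have [aN pN] : a < N /\ p < N by lia.
rewrite !negb_or => /and3P [ap ab' ap2] a_b.
have l_gt2 : 2 < l.
  rewrite ltnNge; apply/negP => l_le2.
  have [l1|l2] : l = 1 \/ l = 2 by lia.
  - by move: ab'; rewrite l1 !modn1.
  - by move: ap ab' ap2; rewrite l2; lia.
have [cp1 cp2 cp02] := consecutive_residues p l_gt2.
have lN := coil_cycle_lt.
have k1_mod : (p.+1 %% l).+1 = p.+2 %[mod l] by rewrite -addn1 modnDml addn1.
have kN : (p.+1 %% l).+1 < N by apply: leq_ltn_trans (ltn_pmod _ l_gt0) lN.
case/orientedE: a_b => L [aL bL _].
case/orientedE: (coil_next bN) => L0 [pL0 bL0 _].
case/orientedE: (coil_next kN) => L1 [kL1 k1L1 _].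
have bL1 : on_line L1 (coil_pt p.+1).
  apply: (same_cell_on_line coil_gridded) kL1.
  by apply: coil_same_cell; rewrite ?modn_mod // ltnW.
have residues := (negPf ap, negPf ab', negPf ap2, negPf cp1, negPf cp2, negPf cp02).
case: (lines_through_point coil_gridded bL bL0 bL1) => eL; subst.
- by case: (coil_line_residues aN pN bN aL pL0 bL) => /eqP; rewrite ?residues.
- by case: (coil_line_residues aN bN kN aL bL k1L1) => /eqP; rewrite ?k1_mod ?residues.
- by case: (coil_line_residues pN bN kN pL0 bL0 k1L1) => /eqP; rewrite ?k1_mod ?residues.
Qed.

Lemma coil_arrow_back_or_next a b : a < N -> b < N -> a ~> b -> b < a \/ b = a.+1.
Proof.
move=> aN bN a_b; case: (ltngtP a b) => [ab|ba|ab]; [right | by left | ]; last first.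
  by move: a_b; rewrite ab => /oriented_irr.
case: b ab bN a_b => // p ab bN a_b.
have [-> //|pa] := eqVneq p a.
have ap : a < p by lia.
case: (boolP [|| a == p %[mod l], a == p.+1 %[mod l] | a == p.+2 %[mod l]]).
- by move/(coil_back_near ap bN)/(oriented_asym HM coil_gridded a_b).
- by move/(coil_far_no_arrow ab bN).
Qed.
End CoilCells.
End Coil.

Local Open Scope ring_scope.

Theorem lemma4p11 (m n : nat) (M : 'M[int]_(m, n))
  (c : 'I_m -> int) (r : 'I_n -> int) (S : {set 'I_m * 'I_n}) :
  partial_mult M c r ->
  cycle_cells M S -> (forall S', cycle_cells M S' -> S' = S) ->
  forall (pi : gperm) (spi : {perm 'I_(glen pi)}) (labpi : 'I_#|S| -> 'I_m * 'I_n)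
         (sg : gperm) (ssg : {perm 'I_(glen sg)}) (labsg : 'I_#|S| -> 'I_m * 'I_n),
  is_coil M c r S pi spi labpi ->
  is_coil M c r S sg ssg labsg ->
  (glen sg < glen pi)%N ->
  ~ exists f : 'I_(glen sg) -> 'I_(glen pi),
      labelled_embedding m n (coil_label ssg) (coil_label spi) f.
Proof.
move=> HM cyc _ pi spi labpi sg ssg labsg coil_pi coil_sg lt_sg_pi [f emb].
have l_lt := coil_cycle_lt coil_sg.
have x0 : 'I_(glen pi) by exists 0%N; lia.
have y0 : 'I_(glen sg) by exists 0%N; lia.
have l_gt0 := coil_cycle_gt0 coil_sg y0.
pose Q := coil_pt ssg y0; pose phi k := val (spi^-1 (f (Q k)))%g.
have phi_arrow k k' : oriented c r (Q k) (Q k') ->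
    (phi k' < phi k)%N \/ phi k' = (phi k).+1.
  move/(labelled_embedding_oriented (coil_gridded coil_sg) emb).
  rewrite -[f (Q k)](coil_ptK spi x0) -[f (Q k')](coil_ptK spi x0).
  exact: (coil_arrow_back_or_next HM coil_pi l_gt0 cyc (ltn_ord _) (ltn_ord _)).
have phi_inj : {in gtn (glen sg) &, injective phi}.
  move=> i j /[!inE] iK jK /val_inj /perm_inj /(labelled_embedding_inj emb).
  by move/(congr1 (fun x => val (ssg^-1 x)%g)); rewrite /= !coil_pt_index.
have phi_label k : (k < glen sg)%N ->
    ((k == 0) || (k == (glen sg).-1))%N = ((phi k == 0) || (phi k == (glen pi).-1))%N.
  by move=> kK; case: emb => _ _ _ /(_ (Q k)); rewrite /coil_label coil_pt_index.
have phi_lt k : (phi k < glen pi)%N by exact: ltn_ord.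
have := phi_label 0%N (ltn_trans l_gt0 l_lt); rewrite eqxx => /esym.
case/orP => [/eqP phi0|/eqP phiN].
- have last_id : phi (glen sg).-1 = (glen sg).-1.
    apply: (injective_chain_id phi0 phi_inj); last by rewrite inE; lia.
    by move=> k kK; apply: (phi_arrow _ _ (coil_next coil_sg y0 kK)).
  by have := phi_label (glen sg).-1; rewrite last_id; lia.
- have to_last k : oriented c r (Q k) (Q 0%N) -> phi k = (glen pi).-2.
    by move/phi_arrow; rewrite phiN; have := phi_lt k; lia.
  have := to_last _ (coil_wrap HM coil_sg y0 l_gt0).
  rewrite -(to_last _ (coil_close coil_sg y0)) => /phi_inj.
  by rewrite !inE => /(_ _ l_lt); lia.
Qed.
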